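(* Let $G$ be a directed graph on vertex set $V$ with $|V|=n$, and let $E^+\subseteq V\times V$ be a set of at most $f$ edges. Let $H$ be the graph on $V$ whose edge set consists of the following edges: (1) for each strongly connected component $S$ of $G$, the edges of a directed cycle on the vertices of $S$; (2) for each $uv\in E^+$ and each $w\in V$, an edge $vw$ if $v$ can reach $w$ in $G\cup E^+$, and an edge $wv$ if $w$ can reach $v$ in $G\cup E^+$. (Then $H$ has $O(nf)$ edges.) Then for all $u,v\in V$, $u$ and $v$ are strongly connected in $G\cup E^+$ if and only if they are strongly connected in $H$.
   Context: Two vertices are strongly connected if each can reach the other; strongly connected components are the equivalence classes of this relation. *)

From mathcomp Require Import all_boot.
Set Implicit Arguments. Unset Strict Implicit. Unset Printing Implicit Defensive.

Definition strongly_connected (V : finType) (e : rel V) (u v : V) : bool :=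
  connect e u v && connect e v u.

Definition scc (V : finType) (e : rel V) (x : V) : {set V} :=
  [set y | strongly_connected e x y].
Definition sccs (V : finType) (e : rel V) : {set {set V}} :=
  [set scc e x | x in V].

Definition graph_union (V : finType) (G : rel V) (Eplus : {set V * V}) : rel V :=
  fun a b => G a b || ((a, b) \in Eplus).

(* A choice of directed cycle for every SCC: cyc S is a duplicate-free
   enumeration of S, and the cycle edges are x -> next (cyc S) x. *)
Definition cycle_choice (V : finType) (G : rel V) (cyc : {set V} -> seq V) : Prop :=
  forall S, S \in sccs G -> uniq (cyc S) /\ cyc S =i S.

Definition Hgraph (V : finType) (G : rel V) (Eplus : {set V * V})
    (cyc : {set V} -> seq V) : rel V :=
  fun a b =>
    [exists S in sccs G, (a \in cyc S) && (next (cyc S) a == b)]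
    || [exists uv in Eplus,
          ((a == uv.2) && connect (graph_union G Eplus) uv.2 b)
          || ((b == uv.2) && connect (graph_union G Eplus) a uv.2)].

(* Every edge of H is realised by a path of G ∪ E+, so vertices strongly
   connected in H are strongly connected in G ∪ E+. Conversely, take u, v strongly connected in G ∪ E+. If
   the two paths joining them avoid E+, then u and v lie in one strongly
   connected component of G, and its cycle in H joins them. Otherwise some
   edge xy of E+ lies on one of the paths, so u, v and y are pairwise
   strongly connected in G ∪ E+, and the edges of type (2) at y connect
   both u and v to y in H in both directions. *)
From mathcomp Require Import all_boot.
Set Implicit Arguments.
Unset Strict Implicit.
Unset Printing Implicit Defensive.

Section StronglyConnected.
Variables (V : finType) (e : rel V).

Lemma strongly_connected_sym u v :
  strongly_connected e u v = strongly_connected e v u.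
Proof. by rewrite /strongly_connected andbC. Qed.

Lemma strongly_connected_trans v u w :
  strongly_connected e u v -> strongly_connected e v w ->
  strongly_connected e u w.
Proof.
case/andP=> uv vu /andP[vw wv]; apply/andP.
by split; [apply: connect_trans uv vw | apply: connect_trans wv vu].
Qed.

End StronglyConnected.

Section SccPreservingGraph.
Variables (V : finType) (G : rel V) (Eplus : {set V * V}).
Variable cyc : {set V} -> seq V.

Local Notation U := (graph_union G Eplus).
Local Notation H := (Hgraph G Eplus cyc).

Lemma connect_graph_union_l : subrel (connect G) (connect U).
Proof. by apply: connect_sub => a b Gab; rewrite connect1 // /graph_union Gab. Qed.

Lemma connect_graph_union_split u v : connect U u v ->
  connect G u v \/ exists2 xy, xy \in Eplus & connect U u xy.2 && connect U xy.2 v.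
Proof.
case/connectP=> p; elim: p u => [|w p IHp] u /=; first by move=> _ ->; left.
case/andP=> Uuw Upw def_v; have Uwv : connect U w v.
  by apply/connectP; exists p.
case/orP: Uuw => [Guw | Euw]; last first.
  by right; exists (u, w); rewrite //= Uwv connect1 // /graph_union Euw orbT.
have [Gwv | [xy Exy /andP[Uwy Uyv]]] := IHp w Upw def_v.
  by left; apply: connect_trans (connect1 Guw) Gwv.
right; exists xy; rewrite // Uyv andbT.
by apply: connect_trans Uwy; apply: connect_graph_union_l; apply: connect1.
Qed.

Lemma strongly_connected_graph_union_split u v :
  strongly_connected U u v ->
  strongly_connected G u v \/
  exists2 xy, xy \in Eplus & strongly_connected U u xy.2.
Proof.
case/andP=> Uuv Uvu.
have [Guv | [xy Exy /andP[Uuy Uyv]]] := connect_graph_union_split Uuv; last first.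
  by right; exists xy; rewrite // /strongly_connected Uuy (connect_trans Uyv).
have [Gvu | [xy Exy /andP[Uvy Uyu]]] := connect_graph_union_split Uvu.
  by left; apply/andP.
by right; exists xy; rewrite // /strongly_connected Uyu (connect_trans Uuv).
Qed.

Lemma strongly_connected_Hgraph_head u xy : xy \in Eplus ->
  strongly_connected U u xy.2 -> strongly_connected H u xy.2.
Proof.
move=> Exy /andP[Uuy Uyu].
by apply/andP; split; apply/connect1/orP; right; apply/existsP; exists xy;
  rewrite Exy !eqxx ?Uuy ?Uyu ?orbT.
Qed.

Hypothesis cyc_scc : cycle_choice G cyc.

Lemma connect_cycle_next_scc S a : S \in sccs G -> a \in cyc S ->
  connect G a (next (cyc S) a).
Proof.
move=> sccS cSa; have [_ cycS] := cyc_scc sccS.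
have cSb : next (cyc S) a \in cyc S by rewrite mem_next.
case/imsetP: sccS cycS cSa cSb => x _ -> cycS.
rewrite !cycS !inE => /andP[_ Gax] /andP[Gxb _].
exact: connect_trans Gax Gxb.
Qed.

Lemma Hgraph_sub_connect : subrel H (connect U).
Proof.
move=> a b /orP[/existsP[S /and3P[sccS cSa /eqP <-]] | /existsP[xy]].
  by apply: connect_graph_union_l; apply: connect_cycle_next_scc.
by case/andP=> _ /orP[] /andP[/eqP ->].
Qed.

Lemma connect_Hgraph_sub : subrel (connect H) (connect U).
Proof. exact: connect_sub Hgraph_sub_connect. Qed.

Lemma connect_Hgraph_scc u v : strongly_connected G u v -> connect H u v.
Proof.
move=> Guv; pose S := scc G u.
have sccS : S \in sccs G by apply: imset_f.
have [uniq_cS cycS] := cyc_scc sccS.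
have cSu : u \in cyc S by rewrite cycS inE /strongly_connected !connect0.
have := fconnect_cycle (cycle_next uniq_cS) cSu v.
rewrite cycS inE Guv => /(connect_sub _)-> // a _ /eqP <-.
have [cSa | cSa] := boolP (a \in cyc S); last by rewrite next_nth (negbTE cSa).
by apply/connect1/orP; left; apply/existsP; exists S; rewrite sccS cSa eqxx.
Qed.

End SccPreservingGraph.

Theorem lemma9 (V : finType) (G : rel V) (Eplus : {set V * V}) (f : nat)
    (cyc : {set V} -> seq V) :
  #|Eplus| <= f ->
  cycle_choice G cyc ->
  forall u v : V,
    strongly_connected (graph_union G Eplus) u v =
    strongly_connected (Hgraph G Eplus cyc) u v.
Proof.
(* The bound on #|Eplus| only controls the size of H. *)
move=> _ cyc_scc u v; apply/idP/idP; last first.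
  by case/andP=> Huv Hvu; apply/andP; split; exact: (connect_Hgraph_sub cyc_scc).
move=> Uuv; have [Guv | [xy Exy Uuy]] := strongly_connected_graph_union_split Uuv.
  by apply/andP; split; apply: connect_Hgraph_scc;
    rewrite // strongly_connected_sym.
rewrite strongly_connected_sym in Uuv.
apply: (strongly_connected_trans (v := xy.2)).
  exact: strongly_connected_Hgraph_head Exy Uuy.
rewrite strongly_connected_sym; apply: strongly_connected_Hgraph_head Exy _.
exact: strongly_connected_trans Uuv Uuy.
Qed.
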